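(* Let $C\subseteq\mathbb{R}^5$ be a cone. The origin is an isolated point of $C\cap\mathfrak{M}$ if and only if one of the following holds: (i) $C$ is a line (through the origin) intersecting $T$ transversely; (ii) $C\subseteq T^>\cup(T\cap\mathfrak{M}^>)\cup\{0\}$; (iii) $C\subseteq T^<\cup(T\cap\mathfrak{M}^<)\cup\{0\}$.
   Context: A cone is the intersection of finitely many closed halfspaces of $\mathbb{R}^5$ whose bounding hyperplanes pass through the origin. In $\mathbb{R}^5$ with coordinates $(u_1,\dots,u_5)$, let $\mathfrak{M}=\{u_5=u_2u_3-u_1u_4\}$, $\mathfrak{M}^>=\{u_5>u_2u_3-u_1u_4\}$, $\mathfrak{M}^<=\{u_5<u_2u_3-u_1u_4\}$, $T=\{u_5=0\}$, $T^>=\{u_5>0\}$, $T^<=\{u_5<0\}$. *)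

From Stdlib Require Import Reals List.
Open Scope R_scope.

Record pt := mkpt { u1 : R; u2 : R; u3 : R; u4 : R; u5 : R }.

Definition origin : pt := mkpt 0 0 0 0 0.

Definition dot (a x : pt) : R :=
  u1 a * u1 x + u2 a * u2 x + u3 a * u3 x + u4 a * u4 x + u5 a * u5 x.

Definition scale (t : R) (v : pt) : pt :=
  mkpt (t * u1 v) (t * u2 v) (t * u3 v) (t * u4 v) (t * u5 v).

Definition sqnorm (x : pt) : R := dot x x.

Definition halfspace (a : pt) (x : pt) : Prop := 0 <= dot a x.

Definition is_cone (C : pt -> Prop) : Prop :=
  exists l : list pt, Forall (fun a => a <> origin) l /\
    forall x, C x <-> Forall (fun a => halfspace a x) l.

Definition Mset (x : pt) : Prop := u5 x = u2 x * u3 x - u1 x * u4 x.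
Definition Mgt  (x : pt) : Prop := u5 x > u2 x * u3 x - u1 x * u4 x.
Definition Mlt  (x : pt) : Prop := u5 x < u2 x * u3 x - u1 x * u4 x.
Definition Tset (x : pt) : Prop := u5 x = 0.
Definition Tgt  (x : pt) : Prop := u5 x > 0.
Definition Tlt  (x : pt) : Prop := u5 x < 0.

(* the origin is an isolated point of S (S contains 0 here) *)
Definition isolated_origin (S : pt -> Prop) : Prop :=
  exists eps, 0 < eps /\ forall x, S x -> sqnorm x < eps * eps -> x = origin.

Definition is_line_dir (C : pt -> Prop) (v : pt) : Prop :=
  v <> origin /\ forall x, C x <-> exists t : R, x = scale t v.

(* the line spanned by v meets the hyperplane T transversely iff v is not in T *)
Definition transverse_to_T (v : pt) : Prop := u5 v <> 0.

(* Write quad u = u2 u3 - u1 u4, so that M = {u5 = quad}.  Along a ray, u5 - quad equals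
   t (u5 x - t quad x) at t x, so near 0 the ray lies strictly on one side of M, decided by the
   sign of u5 x, or by that of -quad x when x lies in T; a nonzero ray in T on which quad
   vanishes lies in M.  If a cone contains independent x and z whose rays leave 0 on opposite
   sides of M, the intermediate value theorem on the segment [d x, d z] gives nonzero points
   of M arbitrarily close to 0.  Forbidding these configurations forces (i), (ii) or (iii):
   points on both sides of T force C to be a line, and otherwise quad has one sign on the
   nonzero points of C in T.  Conversely a transverse line meets M in at most one point besides
   0; under (ii), points of C on M tending to 0 would have a limit direction in C, in T and
   with quad >= 0, which (ii) excludes; and (iii) is (ii) under the symmetry
   (u1,u2,u3,u4,u5) |-> (-u1,-u2,u3,u4,-u5). *)

From Stdlib Require Import Reals List Lra Lia Classical ClassicalEpsilon.
Open Scope R_scope.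

Lemma Un_cv_const (c : R) : Un_cv (fun _ => c) c.
Proof.
  intros e He; exists 0%nat; intros n _; unfold Rdist.
  rewrite Rminus_diag, Rabs_R0; exact He.
Qed.

Lemma Un_cv_inv_S : Un_cv (fun n => / INR (S n)) 0.
Proof.
  apply cv_infty_cv_0; intros M.
  destruct (INR_archimed 1 M Rlt_0_1) as [N HN].
  exists N; intros n Hn.
  apply le_INR in Hn; rewrite S_INR; lra.
Qed.

Definition extraction (f : nat -> nat) : Prop := forall n, (f n < f (S n))%nat.

Lemma extraction_le_compat f : extraction f -> forall m n, (m <= n)%nat -> (f m <= f n)%nat.
Proof. intros Hf m n Hmn; induction Hmn as [|n _ IH]; [lia|]; specialize (Hf n); lia. Qed.

Lemma extraction_ge f : extraction f -> forall n, (n <= f n)%nat.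
Proof. intros Hf n; induction n as [|n IH]; [lia|]; specialize (Hf n); lia. Qed.

Lemma extraction_comp f g : extraction f -> extraction g -> extraction (fun n => f (g n)).
Proof.
  intros Hf Hg n.
  pose proof (extraction_le_compat f Hf (S (g n)) (g (S n)) (Hg n)).
  specialize (Hf (g n)); lia.
Qed.

Lemma Un_cv_extraction u l f : extraction f -> Un_cv u l -> Un_cv (fun n => u (f n)) l.
Proof.
  intros Hf Hu e He; destruct (Hu e He) as [N HN].
  exists N; intros n Hn; apply HN; pose proof (extraction_ge f Hf n); lia.
Qed.

Lemma extraction_of_cluster (u : nat -> R) l :
  ValAdh u l -> exists f, extraction f /\ Un_cv (fun n => u (f n)) l.
Proof.
  intros Hl.
  assert (Hnear : forall N k : nat, exists p, (N <= p)%nat /\ Rabs (u p - l) < / INR (S k)).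
  { intros N k.
    assert (Hk : 0 < / INR (S k)) by (apply Rinv_0_lt_compat, lt_0_INR; lia).
    apply (Hl (fun y => Rabs (y - l) < / INR (S k)) N).
    exists (mkposreal _ Hk); intros y Hy; exact Hy. }
  destruct (choice (fun Nk p => (fst Nk <= p)%nat /\ Rabs (u p - l) < / INR (S (snd Nk))))
    as [pick Hpick]; [intros [N k]; apply Hnear|].
  pose (f := fix f k := match k with O => pick (O, O) | S k' => pick (S (f k'), S k') end).
  assert (Hf : forall k, Rabs (u (f k) - l) < / INR (S k)).
  { intros [|k]; apply (Hpick (_, _)). }
  exists f; split.
  - intros k; apply (Hpick (S (f k), S k)).
  - intros e He; destruct (Un_cv_inv_S e He) as [N HN].
    exists N; intros n Hn; specialize (HN n Hn); unfold Rdist in *.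
    rewrite Rminus_0_r, Rabs_right in HN
      by (apply Rle_ge, Rlt_le, Rinv_0_lt_compat, lt_0_INR; lia).
    specialize (Hf n); lra.
Qed.

Lemma bounded_extraction (u : nat -> R) :
  (forall n, -1 <= u n <= 1) -> exists f l, extraction f /\ Un_cv (fun n => u (f n)) l.
Proof.
  intros Hb; destruct (Bolzano_Weierstrass u _ (compact_P3 (-1) 1) Hb) as [l Hl].
  destruct (extraction_of_cluster u l Hl) as [f Hf]; eauto.
Qed.

Definition padd (x y : pt) : pt :=
  mkpt (u1 x + u1 y) (u2 x + u2 y) (u3 x + u3 y) (u4 x + u4 y) (u5 x + u5 y).

Definition quad (x : pt) : R := u2 x * u3 x - u1 x * u4 x.

Definition gap (x : pt) : R := u5 x - quad x.

Lemma pt_ext x y :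
  u1 x = u1 y -> u2 x = u2 y -> u3 x = u3 y -> u4 x = u4 y -> u5 x = u5 y -> x = y.
Proof. destruct x, y; simpl; intros; subst; reflexivity. Qed.

Lemma Mset_gap x : Mset x <-> gap x = 0.
Proof. unfold Mset, gap, quad; lra. Qed.

Lemma quad_scale t x : quad (scale t x) = t * t * quad x.
Proof. unfold quad, scale; simpl; ring. Qed.

Lemma gap_scale t x : gap (scale t x) = t * (u5 x - t * quad x).
Proof. unfold gap, quad, scale; simpl; ring. Qed.

Lemma sqnorm_scale t x : sqnorm (scale t x) = t * t * sqnorm x.
Proof. unfold sqnorm, dot, scale; simpl; ring. Qed.

Ltac coord_squares x :=
  assert (0 <= u1 x * u1 x) by apply Rle_0_sqr; assert (0 <= u2 x * u2 x) by apply Rle_0_sqr;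
  assert (0 <= u3 x * u3 x) by apply Rle_0_sqr; assert (0 <= u4 x * u4 x) by apply Rle_0_sqr;
  assert (0 <= u5 x * u5 x) by apply Rle_0_sqr.

Lemma sqnorm_nonneg x : 0 <= sqnorm x.
Proof. unfold sqnorm, dot; coord_squares x; lra. Qed.

Lemma sqnorm_eq0 x : sqnorm x = 0 -> x = origin.
Proof. unfold sqnorm, dot; intros H; coord_squares x; apply pt_ext; simpl; nra. Qed.

Lemma sqnorm_pos x : x <> origin -> 0 < sqnorm x.
Proof.
  intros Nx; destruct (sqnorm_nonneg x) as [|E]; [assumption|].
  exfalso; apply Nx, sqnorm_eq0; symmetry; exact E.
Qed.

Lemma quad_le_sqnorm x : quad x <= sqnorm x.
Proof.
  unfold quad, sqnorm, dot; coord_squares x.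
  assert (0 <= (u2 x - u3 x) * (u2 x - u3 x)) by apply Rle_0_sqr.
  assert (0 <= (u1 x + u4 x) * (u1 x + u4 x)) by apply Rle_0_sqr.
  nra.
Qed.

Lemma coord_bounds x : sqnorm x <= 1 ->
  -1 <= u1 x <= 1 /\ -1 <= u2 x <= 1 /\ -1 <= u3 x <= 1 /\ -1 <= u4 x <= 1 /\ -1 <= u5 x <= 1.
Proof. unfold sqnorm, dot; intros H; coord_squares x; repeat split; nra. Qed.

Lemma Mset_unit_rescale x : x <> origin -> Mset x ->
  let r := sqrt (sqnorm x) in
  0 < r /\ sqnorm (scale (/ r) x) = 1 /\ u5 (scale (/ r) x) = r * quad (scale (/ r) x).
Proof.
  intros Nx Mx r; assert (Hs := sqnorm_pos x Nx).
  assert (Hr : 0 < r) by (apply sqrt_lt_R0; exact Hs).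
  assert (Hrr : r * r = sqnorm x) by (apply sqrt_sqrt; lra).
  split; [exact Hr|split].
  - rewrite sqnorm_scale, <- Hrr; field; lra.
  - apply Mset_gap in Mx; unfold gap in Mx; rewrite quad_scale; simpl.
    replace (u5 x) with (quad x) by lra; field; lra.
Qed.

Lemma sqnorm_convex_comb t x z : 0 <= t <= 1 ->
  sqnorm (padd (scale (1 - t) x) (scale t z)) <= sqnorm x + sqnorm z.
Proof.
  intros Ht.
  assert (Hd : 0 <= sqnorm (padd x (scale (-1) z))) by apply sqnorm_nonneg.
  assert (Hx := sqnorm_nonneg x); assert (Hz := sqnorm_nonneg z).
  assert (E : sqnorm (padd (scale (1 - t) x) (scale t z)) =
              (1 - t) * sqnorm x + t * sqnorm z - t * (1 - t) * sqnorm (padd x (scale (-1) z)))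
    by (unfold sqnorm, dot, padd, scale; simpl; ring).
  assert (0 <= t * (1 - t) * sqnorm (padd x (scale (-1) z)))
    by (apply Rmult_le_pos; [apply Rmult_le_pos|]; lra).
  rewrite E; nra.
Qed.

Definition pt_cv (s : nat -> pt) (l : pt) : Prop :=
  Un_cv (fun n => u1 (s n)) (u1 l) /\ Un_cv (fun n => u2 (s n)) (u2 l) /\
  Un_cv (fun n => u3 (s n)) (u3 l) /\ Un_cv (fun n => u4 (s n)) (u4 l) /\
  Un_cv (fun n => u5 (s n)) (u5 l).

Lemma pt_cv_const a : pt_cv (fun _ => a) a.
Proof. repeat split; apply Un_cv_const. Qed.

Lemma pt_cv_dot s t l m :
  pt_cv s l -> pt_cv t m -> Un_cv (fun n => dot (s n) (t n)) (dot l m).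
Proof.
  intros (c1 & c2 & c3 & c4 & c5) (d1 & d2 & d3 & d4 & d5); unfold dot.
  repeat apply CV_plus; apply CV_mult; assumption.
Qed.

Lemma pt_cv_quad s l : pt_cv s l -> Un_cv (fun n => quad (s n)) (quad l).
Proof.
  intros (c1 & c2 & c3 & c4 & _); unfold quad.
  apply CV_minus; apply CV_mult; assumption.
Qed.

Lemma pt_bounded_extraction (y : nat -> pt) :
  (forall n, sqnorm (y n) <= 1) -> exists f l, extraction f /\ pt_cv (fun n => y (f n)) l.
Proof.
  intros Hy; assert (Hb := fun n => coord_bounds _ (Hy n)).
  destruct (bounded_extraction (fun n => u1 (y n))) as (f1 & l1 & I1 & C1);
    [intros n; apply Hb|].
  destruct (bounded_extraction (fun n => u2 (y (f1 n)))) as (f2 & l2 & I2 & C2);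
    [intros n; apply Hb|].
  destruct (bounded_extraction (fun n => u3 (y (f1 (f2 n))))) as (f3 & l3 & I3 & C3);
    [intros n; apply Hb|].
  destruct (bounded_extraction (fun n => u4 (y (f1 (f2 (f3 n)))))) as (f4 & l4 & I4 & C4);
    [intros n; apply Hb|].
  destruct (bounded_extraction (fun n => u5 (y (f1 (f2 (f3 (f4 n))))))) as (f5 & l5 & I5 & C5);
    [intros n; apply Hb|].
  assert (I45 := extraction_comp _ _ I4 I5).
  assert (I345 := extraction_comp _ _ I3 I45).
  assert (I2345 := extraction_comp _ _ I2 I345).
  exists (fun n => f1 (f2 (f3 (f4 (f5 n))))), (mkpt l1 l2 l3 l4 l5).
  split; [exact (extraction_comp _ _ I1 I2345)|].
  repeat split; simpl.
  - exact (Un_cv_extraction _ _ _ I2345 C1).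
  - exact (Un_cv_extraction _ _ _ I345 C2).
  - exact (Un_cv_extraction _ _ _ I45 C3).
  - exact (Un_cv_extraction _ _ _ I5 C4).
  - exact C5.
Qed.

(* A linear isometry preserving M and exchanging the two sides of T. *)
Definition flip (x : pt) : pt := mkpt (- u1 x) (- u2 x) (u3 x) (u4 x) (- u5 x).

Lemma flip_involutive x : flip (flip x) = x.
Proof. apply pt_ext; unfold flip; simpl; ring. Qed.

Lemma flip_origin : flip origin = origin.
Proof. apply pt_ext; unfold flip, origin; simpl; ring. Qed.

Lemma flip_scale t x : flip (scale t x) = scale t (flip x).
Proof. apply pt_ext; unfold flip, scale; simpl; ring. Qed.

Lemma flip_padd x y : flip (padd x y) = padd (flip x) (flip y).
Proof. apply pt_ext; unfold flip, padd; simpl; ring. Qed.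

Lemma dot_flip a x : dot a (flip x) = dot (flip a) x.
Proof. unfold dot, flip; simpl; ring. Qed.

Lemma sqnorm_flip x : sqnorm (flip x) = sqnorm x.
Proof. unfold sqnorm, dot, flip; simpl; ring. Qed.

Lemma gap_flip x : gap (flip x) = - gap x.
Proof. unfold gap, quad, flip; simpl; ring. Qed.

Lemma Mset_flip x : Mset (flip x) <-> Mset x.
Proof. rewrite !Mset_gap, gap_flip; lra. Qed.

Definition pos_side (x : pt) : Prop := Tgt x \/ (Tset x /\ Mgt x) \/ x = origin.
Definition neg_side (x : pt) : Prop := Tlt x \/ (Tset x /\ Mlt x) \/ x = origin.

Lemma flip_eq_origin x : flip x = origin <-> x = origin.
Proof. split; intros E; [rewrite <- (flip_involutive x), E|rewrite E]; apply flip_origin. Qed.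

Lemma neg_side_flip x : neg_side (flip x) <-> pos_side x.
Proof.
  unfold neg_side, pos_side; rewrite flip_eq_origin.
  unfold Tlt, Tgt, Tset, Mlt, Mgt, flip; simpl.
  split; intros [H|[[H H']|H]]; try (right; right; exact H); [left|right; left; split|left|right; left; split];
    lra.
Qed.

Lemma neg_sides_flip (C : pt -> Prop) :
  (forall x, C (flip x) -> pos_side x) -> forall x, C x -> neg_side x.
Proof.
  intros H x Cx; rewrite <- (flip_involutive x).
  apply neg_side_flip, H; rewrite flip_involutive; exact Cx.
Qed.

Lemma pos_sides_flip (C : pt -> Prop) :
  (forall x, C (flip x) -> neg_side x) -> forall x, C x -> pos_side x.
Proof.
  intros H x Cx; apply neg_side_flip, H; rewrite flip_involutive; exact Cx.
Qed.

Record convex_cone (C : pt -> Prop) : Prop := {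
  cone_scale : forall t x, 0 <= t -> C x -> C (scale t x);
  cone_add : forall x y, C x -> C y -> C (padd x y) }.

Definition seq_closed (C : pt -> Prop) : Prop :=
  forall s l, (forall n, C (s n)) -> pt_cv s l -> C l.

Lemma is_cone_convex C : is_cone C -> convex_cone C.
Proof.
  intros (l & _ & Hl); split.
  - intros t x Ht Hx; apply Hl; apply Hl in Hx; revert Hx; apply Forall_impl.
    unfold halfspace; intros a Ha.
    replace (dot a (scale t x)) with (t * dot a x) by (unfold dot, scale; simpl; ring).
    apply Rmult_le_pos; assumption.
  - intros x y Hx Hy; apply Hl; apply Hl in Hx, Hy.
    rewrite Forall_forall in *; unfold halfspace in *; intros a Ha.
    replace (dot a (padd x y)) with (dot a x + dot a y) by (unfold dot, padd; simpl; ring).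
    specialize (Hx a Ha); specialize (Hy a Ha); lra.
Qed.

Lemma is_cone_seq_closed C : is_cone C -> seq_closed C.
Proof.
  intros (l & _ & Hl) s x Hs Hcv; apply Hl.
  rewrite Forall_forall; intros a Ha; unfold halfspace.
  apply (Rle_cv_lim (Un := fun _ => 0) (Vn := fun n => dot a (s n))).
  - intros n; assert (H := proj1 (Hl (s n)) (Hs n)); rewrite Forall_forall in H.
    exact (H a Ha).
  - apply Un_cv_const.
  - exact (pt_cv_dot _ _ _ _ (pt_cv_const a) Hcv).
Qed.

Lemma convex_cone_flip C : convex_cone C -> convex_cone (fun x => C (flip x)).
Proof.
  intros HC; split.
  - intros t x Ht Cx; rewrite flip_scale; apply (cone_scale _ HC); assumption.
  - intros x y Cx Cy; rewrite flip_padd; apply (cone_add _ HC); assumption.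
Qed.

Lemma is_cone_flip C : is_cone C -> is_cone (fun x => C (flip x)).
Proof.
  intros (l & Hnz & Hl); exists (map flip l); split.
  - rewrite Forall_map; revert Hnz; apply Forall_impl; intros a Ha E.
    apply Ha; rewrite <- (flip_involutive a), E; apply flip_origin.
  - intros x; rewrite Hl, Forall_map; unfold halfspace.
    rewrite !Forall_forall; split; intros H a Ha; specialize (H a Ha);
      [rewrite <- dot_flip|rewrite dot_flip]; exact H.
Qed.

Lemma not_isolated_origin S : ~ isolated_origin S <->
  forall eps, 0 < eps -> exists x, S x /\ x <> origin /\ sqnorm x < eps * eps.
Proof.
  split.
  - intros Hn eps He; apply NNPP; intros Hno; apply Hn; exists eps; split; [exact He|].
    intros x Sx Hx; apply NNPP; intros Nx; apply Hno; exists x; auto.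
  - intros H (eps & He & Hi); destruct (H eps He) as (x & Sx & Nx & Hx); exact (Nx (Hi x Sx Hx)).
Qed.

Lemma isolated_flip (C D : pt -> Prop) : (forall x, D x -> C (flip x)) ->
  isolated_origin (fun x => C x /\ Mset x) -> isolated_origin (fun x => D x /\ Mset x).
Proof.
  intros HDC (eps & He & Hi); exists eps; split; [exact He|]; intros x [Dx Mx] Hx.
  rewrite <- (flip_involutive x), (Hi (flip x)), flip_origin; [reflexivity| |].
  - split; [exact (HDC x Dx)|apply Mset_flip, Mx].
  - rewrite sqnorm_flip; exact Hx.
Qed.

Lemma isolated_two_points S w : (forall x, S x -> x = origin \/ x = w) -> isolated_origin S.
Proof.
  intros HS; destruct (classic (w = origin)) as [Hw|Nw].
  - exists 1; split; [lra|]; intros x Sx _; destruct (HS x Sx) as [|E]; [|rewrite E]; assumption.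
  - exists (sqrt (sqnorm w)); split; [apply sqrt_lt_R0, sqnorm_pos, Nw|].
    intros x Sx Hx; destruct (HS x Sx) as [|E]; [assumption|rewrite E in Hx].
    rewrite sqrt_sqrt in Hx by apply sqnorm_nonneg; lra.
Qed.

Definition small_scales (P : R -> Prop) : Prop :=
  exists d0, 0 < d0 /\ forall d, 0 < d -> d <= d0 -> P d.

Lemma small_scales_and (P Q : R -> Prop) :
  small_scales P -> small_scales Q -> small_scales (fun d => P d /\ Q d).
Proof.
  intros (a & Ha & HP) (b & Hb & HQ); exists (Rmin a b); split; [apply Rmin_pos; assumption|].
  intros d Hd Hab; split; [apply HP|apply HQ]; try assumption.
  - exact (Rle_trans _ _ _ Hab (Rmin_l a b)).
  - exact (Rle_trans _ _ _ Hab (Rmin_r a b)).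
Qed.

Lemma small_scales_sqr_lt K eps : 0 <= K -> 0 < eps -> small_scales (fun d => d * d * K < eps * eps).
Proof.
  intros HK He; exists (eps / (K + 1)); split; [apply Rdiv_lt_0_compat; lra|].
  intros d Hd Hd0.
  assert (Hle : d * (K + 1) <= eps).
  { apply (Rmult_le_compat_r (K + 1)) in Hd0; [|lra].
    unfold Rdiv in Hd0; rewrite Rmult_assoc, Rinv_l, Rmult_1_r in Hd0; lra. }
  assert (d * (K + 1) * (d * (K + 1)) <= eps * eps) by (apply Rmult_le_compat; nra).
  nra.
Qed.

(* The germ at 0 of the ray through x lies in M^< (resp. M^>): u5 decides off T and quad on T. *)
Definition ray_below_M (x : pt) : Prop := u5 x < 0 \/ (u5 x = 0 /\ 0 < quad x).
Definition ray_above_M (x : pt) : Prop := 0 < u5 x \/ (u5 x = 0 /\ quad x < 0).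

Lemma small_scales_gap_neg x : ray_below_M x ->
  small_scales (fun d => gap (scale d x) < 0).
Proof.
  intros [Hu|[Hu Hq]].
  - exists (- u5 x / (quad x * quad x + 1)).
    split; [apply Rdiv_lt_0_compat; nra|]; intros d Hd Hd0.
    assert (Hle : d * (quad x * quad x + 1) <= - u5 x).
    { apply (Rmult_le_compat_r (quad x * quad x + 1)) in Hd0; [|nra].
      unfold Rdiv in Hd0; rewrite Rmult_assoc, Rinv_l, Rmult_1_r in Hd0; nra. }
    assert (0 < d * ((quad x + 1 / 2) * (quad x + 1 / 2) + 3 / 4))
      by (apply Rmult_lt_0_compat; [|assert (H := Rle_0_sqr (quad x + 1 / 2)); unfold Rsqr in H]; lra).
    assert (u5 x - d * quad x < 0) by nra.
    rewrite gap_scale; nra.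
  - exists 1; split; [lra|]; intros d Hd _.
    assert (0 < d * d * quad x) by (apply Rmult_lt_0_compat; [apply Rmult_lt_0_compat|]; lra).
    rewrite gap_scale, Hu; lra.
Qed.

Lemma small_scales_gap_pos x : ray_above_M x ->
  small_scales (fun d => 0 < gap (scale d x)).
Proof.
  intros H; destruct (small_scales_gap_neg (flip x)) as (d0 & Hd0 & Hneg).
  - unfold ray_above_M, ray_below_M, quad, flip in *; simpl; lra.
  - exists d0; split; [exact Hd0|]; intros d Hd Hdd.
    specialize (Hneg d Hd Hdd); rewrite <- flip_scale, gap_flip in Hneg; lra.
Qed.

(** * Crossing M inside a cone *)

Definition independent (x z : pt) : Prop := x <> origin /\ forall c, z <> scale c x.

Lemma scale_eq_origin d x : d <> 0 -> scale d x = origin -> x = origin.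
Proof.
  intros Hd E; apply pt_ext; unfold scale, origin in *; injection E; simpl; intros;
    apply (Rmult_eq_reg_l d); lra.
Qed.

Lemma independent_scale d x z : 0 < d -> independent x z -> independent (scale d x) (scale d z).
Proof.
  intros Hd [Nx Hz]; split.
  - intros E; apply Nx, (scale_eq_origin d); [lra|exact E].
  - intros c E; apply (Hz c); apply pt_ext; unfold scale in *; injection E; simpl; intros;
      apply (Rmult_eq_reg_l d); lra.
Qed.

Lemma convex_cone_gap_root C x z : convex_cone C -> C x -> C z -> independent x z ->
  gap x < 0 -> 0 < gap z ->
  exists w, C w /\ Mset w /\ w <> origin /\ sqnorm w <= sqnorm x + sqnorm z.
Proof.
  intros HC Cx Cz [Nx Hz] Gx Gz.
  pose (w t := padd (scale (1 - t) x) (scale t z)).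
  assert (Hg : continuity (fun t => gap (w t))) by (unfold w, gap, quad, padd, scale; simpl; reg).
  assert (w0 : w 0 = x) by (apply pt_ext; unfold w, padd, scale; simpl; ring).
  assert (w1 : w 1 = z) by (apply pt_ext; unfold w, padd, scale; simpl; ring).
  destruct (IVT _ 0 1 Hg Rlt_0_1) as (t & Ht & Gt); [rewrite w0; exact Gx|rewrite w1; exact Gz|].
  assert (Ht0 : t <> 0) by (intros ->; rewrite w0 in Gt; lra).
  exists (w t); repeat split.
  - apply (cone_add _ HC); apply (cone_scale _ HC); lra || assumption.
  - apply Mset_gap, Gt.
  - assert (Hsolve : forall a b, (1 - t) * a + t * b = 0 -> b = - (1 - t) / t * a).
    { intros a b Hab; apply (Rmult_eq_reg_l t); [|exact Ht0].
      replace (t * (- (1 - t) / t * a)) with (- ((1 - t) * a)) by (field; exact Ht0); lra. }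
    intros E; apply (Hz (- (1 - t) / t)); apply pt_ext; unfold w, padd, scale, origin in *;
      injection E; simpl; intros; apply Hsolve; assumption.
  - apply sqnorm_convex_comb, Ht.
Qed.

Lemma not_isolated_of_sign_change C x z : convex_cone C -> C x -> C z -> independent x z ->
  ray_below_M x -> ray_above_M z -> ~ isolated_origin (fun w => C w /\ Mset w).
Proof.
  intros HC Cx Cz Hxz Hx Hz; apply not_isolated_origin; intros eps He.
  assert (Hsign := small_scales_and _ _ (small_scales_gap_neg x Hx) (small_scales_gap_pos z Hz)).
  assert (HK : 0 <= sqnorm x + sqnorm z)
    by (assert (H := sqnorm_nonneg x); assert (H' := sqnorm_nonneg z); lra).
  destruct (small_scales_and _ _ Hsign (small_scales_sqr_lt _ _ HK He))
    as (d & Hd & Hall); destruct (Hall d Hd (Rle_refl d)) as [[Gx Gz] Hsmall].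
  destruct (convex_cone_gap_root C (scale d x) (scale d z)) as (w & Cw & Mw & Nw & Hw);
    try apply (cone_scale _ HC); try lra; try assumption.
  - apply independent_scale; assumption.
  - exists w; repeat split; try assumption.
    rewrite !sqnorm_scale in Hw; lra.
Qed.

Lemma not_isolated_of_null_ray C x : convex_cone C -> C x -> x <> origin ->
  u5 x = 0 -> quad x = 0 -> ~ isolated_origin (fun w => C w /\ Mset w).
Proof.
  intros HC Cx Nx Hu Hq; apply not_isolated_origin; intros eps He.
  destruct (small_scales_sqr_lt _ _ (sqnorm_nonneg x) He) as (d & Hd & Hsmall).
  exists (scale d x); repeat split.
  - apply (cone_scale _ HC); [lra|exact Cx].
  - apply Mset_gap; rewrite gap_scale, Hu, Hq; ring.
  - intros E; apply Nx, (scale_eq_origin d); [lra|exact E].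
  - rewrite sqnorm_scale; apply Hsmall; lra.
Qed.

(** * Cones meeting M only at the origin *)

Section IsolatedCone.

Variable C : pt -> Prop.
Hypothesis HC : convex_cone C.
Hypothesis Hiso : isolated_origin (fun w => C w /\ Mset w).

Lemma isolated_two_sided_line x z : C x -> C z -> u5 x < 0 -> 0 < u5 z -> is_line_dir C x.
Proof.
  intros Cx Cz Hx Hz.
  assert (Nx : x <> origin) by (intros ->; simpl in Hx; lra).
  assert (Hray : forall w, C w -> 0 < u5 w -> exists c, w = scale c x).
  { intros w Cw Hw; apply NNPP; intros Hno; apply (not_isolated_of_sign_change C x w); auto.
    - split; [exact Nx|]; intros c E; apply Hno; exists c; exact E.
    - left; exact Hx.
    - left; exact Hw. }
  destruct (Hray z Cz Hz) as [c ->]; simpl in Hz.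
  assert (Hc : c < 0) by nra.
  split; [exact Nx|]; intros w; split.
  - intros Cw.
    (* w + k z lies above T, hence on the line through x, and then so does w. *)
    pose (k := (u5 w * u5 w + 1) / (c * u5 x)).
    assert (Hk : 0 < k) by (apply Rdiv_lt_0_compat; nra).
    destruct (Hray (padd w (scale k (scale c x)))) as [c' E].
    + apply (cone_add _ HC); [exact Cw|apply (cone_scale _ HC); [lra|exact Cz]].
    + unfold k; simpl; field_simplify; nra.
    + exists (c' - k * c); apply pt_ext; unfold padd, scale in *; injection E; simpl; intros; lra.
  - intros [t ->]; destruct (Rle_or_lt 0 t) as [Ht|Ht].
    + apply (cone_scale _ HC); assumption.
    + replace (scale t x) with (scale (t / c) (scale c x))
        by (apply pt_ext; unfold scale; simpl; field; lra).
      apply (cone_scale _ HC); [left; apply Rdiv_neg_neg|]; assumption.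
Qed.

Lemma isolated_null_quad x : C x -> x <> origin -> u5 x = 0 -> quad x <> 0.
Proof. intros Cx Nx Hu Hq; exact (not_isolated_of_null_ray C x HC Cx Nx Hu Hq Hiso). Qed.

Lemma isolated_upper_sides : (forall x, C x -> 0 <= u5 x) ->
  (forall x, C x -> pos_side x) \/ (forall x, C x -> neg_side x).
Proof.
  intros Hup.
  destruct (classic (exists z, C z /\ 0 < u5 z)) as [(z & Cz & Hz)|Hflat].
  - left; intros x Cx; destruct (classic (x = origin)) as [|Nx]; [right; right; assumption|].
    destruct (Hup x Cx) as [Hx|Hx]; [left; exact Hx|right; left].
    assert (Hq : quad x < 0).
    { destruct (Rtotal_order (quad x) 0) as [|[Hq|Hq]]; [assumption|
        exfalso; exact (isolated_null_quad x Cx Nx (eq_sym Hx) Hq)|].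
      exfalso; apply (not_isolated_of_sign_change C x z); auto.
      - split; [exact Nx|]; intros c ->; simpl in Hz; rewrite <- Hx in Hz; lra.
      - right; split; auto.
      - left; exact Hz. }
    unfold Tset, Mgt, quad in *; split; lra.
  - assert (Hflat' : forall x, C x -> u5 x = 0).
    { intros x Cx; destruct (Hup x Cx); [exfalso; apply Hflat; exists x|]; auto. }
    destruct (classic (exists y, C y /\ 0 < quad y)) as [(y & Cy & Hy)|Hneg].
    + right; intros x Cx; destruct (classic (x = origin)) as [|Nx]; [right; right; assumption|].
      right; left; assert (Hx := Hflat' x Cx).
      assert (Hq : 0 < quad x).
      { destruct (Rtotal_order (quad x) 0) as [Hq|[Hq|Hq]]; [|
          exfalso; exact (isolated_null_quad x Cx Nx Hx Hq)|assumption].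
        exfalso; apply (not_isolated_of_sign_change C y x); auto.
        - split; [intros ->; unfold quad in Hy; simpl in Hy; lra|].
          intros c ->; rewrite quad_scale in Hq; nra.
        - right; split; auto.
        - right; split; auto. }
      unfold Tset, Mlt, quad in *; split; lra.
    + left; intros x Cx; destruct (classic (x = origin)) as [|Nx]; [right; right; assumption|].
      right; left; assert (Hx := Hflat' x Cx).
      assert (Hq : quad x < 0).
      { destruct (Rtotal_order (quad x) 0) as [|[Hq|Hq]]; [assumption| |];
          exfalso; [exact (isolated_null_quad x Cx Nx Hx Hq)|apply Hneg; exists x; auto]. }
      unfold Tset, Mgt, quad in *; split; lra.
Qed.

End IsolatedCone.

Lemma isolated_lower_sides C : convex_cone C -> isolated_origin (fun w => C w /\ Mset w) ->
  (forall x, C x -> u5 x <= 0) ->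
  (forall x, C x -> pos_side x) \/ (forall x, C x -> neg_side x).
Proof.
  intros HC Hiso Hlow.
  destruct (isolated_upper_sides (fun x => C (flip x)) (convex_cone_flip C HC)
              (isolated_flip C _ (fun x Cx => Cx) Hiso)) as [H|H].
  - intros x Cx; specialize (Hlow _ Cx); simpl in Hlow; lra.
  - right; exact (neg_sides_flip C H).
  - left; exact (pos_sides_flip C H).
Qed.

(* Blow-up at 0: on M the unit vectors y = x / |x| satisfy u5 y = |x| quad y, so a limit
   direction lies in T, and has quad >= 0 because u5 >= 0 on C. *)
Lemma not_isolated_tangent_direction C : seq_closed C -> convex_cone C ->
  (forall x, C x -> 0 <= u5 x) -> ~ isolated_origin (fun w => C w /\ Mset w) ->
  exists l, C l /\ sqnorm l = 1 /\ u5 l = 0 /\ 0 <= quad l.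
Proof.
  intros Hcl HC Hup Hn; rewrite not_isolated_origin in Hn.
  destruct (choice (fun n x => (C x /\ Mset x) /\ x <> origin /\ sqnorm x < / INR (S n) * / INR (S n)))
    as [xs Hxs]; [intros n; apply Hn, Rinv_0_lt_compat, lt_0_INR; lia|].
  pose (r n := sqrt (sqnorm (xs n))); pose (y n := scale (/ r n) (xs n)).
  assert (Hy : forall n, C (y n) /\ sqnorm (y n) = 1 /\ 0 <= u5 (y n) <= r n).
  { intros n; destruct (Hxs n) as ([Cx Mx] & Nx & _).
    destruct (Mset_unit_rescale _ Nx Mx) as (Hr & Hs & Hu); fold (r n) (y n) in Hr, Hs, Hu.
    assert (Cy : C (y n)) by (apply (cone_scale _ HC); [left; apply Rinv_0_lt_compat|]; assumption).
    assert (Hq := quad_le_sqnorm (y n)); assert (Hu0 := Hup _ Cy).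
    repeat split; try assumption; nra. }
  assert (Hr : Un_cv r 0).
  { intros e He; destruct (Un_cv_inv_S e He) as [N HN]; exists N; intros n Hn'.
    specialize (HN n Hn'); destruct (Hxs n) as (_ & Nx & Hsmall).
    assert (0 < r n) by (apply sqrt_lt_R0, sqnorm_pos, Nx).
    assert (r n < / INR (S n)).
    { apply Rsqr_incrst_0; [unfold Rsqr, r; rewrite sqrt_sqrt by apply sqnorm_nonneg|lra|];
        [exact Hsmall|apply Rlt_le, Rinv_0_lt_compat, lt_0_INR; lia]. }
    unfold Rdist in *; rewrite Rminus_0_r in *; rewrite Rabs_right in * by lra; lra. }
  destruct (pt_bounded_extraction y) as (f & l & Hf & Hl); [intros n; right; apply Hy|].
  exists l; split; [|split; [|split]].
  - apply (Hcl (fun n => y (f n)) l); [intros n; apply Hy|exact Hl].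
  - apply (UL_sequence (fun n => sqnorm (y (f n)))); [apply pt_cv_dot; exact Hl|].
    apply (Un_cv_ext (fun _ => 1)); [intros n; symmetry; apply Hy|apply Un_cv_const].
  - destruct Hl as (_ & _ & _ & _ & Hl5); apply Rle_antisym.
    + apply (Rle_cv_lim (Un := fun n => u5 (y (f n))) (Vn := fun n => r (f n)));
        [intros n; apply Hy|exact Hl5|exact (Un_cv_extraction _ _ _ Hf Hr)].
    + apply (Rle_cv_lim (Un := fun _ => 0) (Vn := fun n => u5 (y (f n))));
        [intros n; apply Hy|apply Un_cv_const|exact Hl5].
  - apply (Rle_cv_lim (Un := fun _ => 0) (Vn := fun n => quad (y (f n))));
      [|apply Un_cv_const|apply pt_cv_quad, Hl].
    intros n; destruct (Hxs (f n)) as ([Cx Mx] & Nx & _).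
    destruct (Mset_unit_rescale _ Nx Mx) as (Hr' & _ & Hu); fold (r (f n)) (y (f n)) in Hr', Hu.
    assert (Hu0 := Hup _ (proj1 (Hy (f n)))); nra.
Qed.

Lemma isolated_of_pos_side C : seq_closed C -> convex_cone C ->
  (forall x, C x -> pos_side x) -> isolated_origin (fun w => C w /\ Mset w).
Proof.
  intros Hcl HC Hpos; apply NNPP; intros Hn.
  assert (Hup : forall x, C x -> 0 <= u5 x).
  { intros x Cx; destruct (Hpos x Cx) as [H|[[H _]|H]]; [unfold Tgt in H; lra|unfold Tset in H; lra|].
    rewrite H; simpl; lra. }
  destruct (not_isolated_tangent_direction C Hcl HC Hup Hn) as (l & Cl & Hs & Hu & Hq).
  destruct (Hpos l Cl) as [H|[[_ H]|H]]; unfold Tgt, Mgt, quad in *.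
  - lra.
  - lra.
  - rewrite H in Hs; unfold sqnorm, dot in Hs; simpl in Hs; lra.
Qed.

Lemma isolated_transverse_line C v : is_line_dir C v -> transverse_to_T v ->
  isolated_origin (fun w => C w /\ Mset w).
Proof.
  intros [_ Hl] Hv; apply (isolated_two_points _ (scale (u5 v / quad v) v)).
  intros x [Cx Mx]; apply Hl in Cx; destruct Cx as [t ->].
  apply Mset_gap in Mx; rewrite gap_scale in Mx.
  destruct (Rmult_integral _ _ Mx) as [->|Ht].
  - left; apply pt_ext; unfold scale; simpl; ring.
  - right; assert (Hq : quad v <> 0) by (intros Hq; rewrite Hq in Ht; apply Hv; lra).
    replace (u5 v) with (t * quad v) by lra; unfold Rdiv; rewrite Rmult_assoc, Rinv_r, Rmult_1_r
      by exact Hq; reflexivity.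
Qed.

Theorem lemma8 (C : pt -> Prop) (hC : is_cone C) :
  isolated_origin (fun x => C x /\ Mset x) <->
  ((exists v, is_line_dir C v /\ transverse_to_T v) \/
   (forall x, C x -> Tgt x \/ (Tset x /\ Mgt x) \/ x = origin) \/
   (forall x, C x -> Tlt x \/ (Tset x /\ Mlt x) \/ x = origin)).
Proof.
  pose proof (is_cone_convex C hC) as HC.
  split.
  - intros Hiso.
    destruct (classic (exists x, C x /\ u5 x < 0)) as [(x & Cx & Hx)|Hlow];
      [destruct (classic (exists z, C z /\ 0 < u5 z)) as [(z & Cz & Hz)|Hhigh]|].
    + left; exists x; split; [exact (isolated_two_sided_line C HC Hiso x z Cx Cz Hx Hz)|].
      unfold transverse_to_T; lra.
    + right; apply (isolated_lower_sides C HC Hiso).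
      intros y Cy; apply Rnot_lt_le; intros Hy; apply Hhigh; exists y; auto.
    + right; apply (isolated_upper_sides C HC Hiso).
      intros y Cy; apply Rnot_lt_le; intros Hy; apply Hlow; exists y; auto.
  - intros [(v & Hv & Hvt)|[Hpos|Hneg]].
    + exact (isolated_transverse_line C v Hv Hvt).
    + exact (isolated_of_pos_side C (is_cone_seq_closed C hC) HC Hpos).
    + pose proof (is_cone_flip C hC) as hCf.
      apply (isolated_flip (fun x => C (flip x))); [intros x Cx; rewrite flip_involutive; exact Cx|].
      apply (isolated_of_pos_side _ (is_cone_seq_closed _ hCf) (is_cone_convex _ hCf)).
      intros x Cx; apply neg_side_flip, Hneg, Cx.
Qed.
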